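(* Let $\Gamma$ be a torsion-free group and let $S$ be a non-empty free $\Gamma$-set. Then there exists a $\Gamma$-equivariant chain map $\eta\colon\mathbb{Z}[S^{*+1}]\to\mathbb{Z}[S^{*+1}]$ extending $\mathrm{id}_\mathbb{Z}$ (hence $\eta$ is $\mathbb{Z}\Gamma$-chain homotopic to the identity) such that for all $k$ and all chains $c\in\mathbb{Z}[S^{k+1}]$, \[|\eta_k(c)|_1\leq(k+1)!\cdot\|c\|_{\mathrm{ess}}.\]
   Context: $\mathbb{Z}[S^{*+1}]$ carries the boundary $\partial(s_0,\dots,s_k)=\sum_j(-1)^j(s_0,\dots,\widehat{s_j},\dots,s_k)$, the diagonal $\Gamma$-action and augmentation $s_0\mapsto1$; extending $\mathrm{id}_\mathbb{Z}$ means compatibility with this augmentation. For $c=\sum_x a_x x\in\mathbb{Z}[S^{k+1}]$, $|c|_1=\sum_x|a_x|$ and $\|c\|_{\mathrm{ess}}=\sum_{x\text{ essential}}|a_x|$, where a tuple is essential if its entries are pairwise distinct. *)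

From mathcomp Require Import all_boot all_order all_algebra.
From mathcomp Require monoid.
From mathcomp Require Import freeg.

Set Implicit Arguments.
Unset Strict Implicit.
Unset Printing Implicit Defensive.

Import Order.TTheory GRing.Theory Num.Theory.
Local Open Scope ring_scope.

Definition torsion_free (G : groupType) : Prop :=
  forall (g : G) (n : nat), (0 < n)%N -> monoid.natexp g n = monoid.one -> g = monoid.one.

Definition is_action (G : groupType) (S : Type) (act : G -> S -> S) : Prop :=
  (forall s, act monoid.one s = s) /\
  (forall g h s, act (monoid.mul g h) s = act g (act h s)).

Definition free_action (G : groupType) (S : Type) (act : G -> S -> S) : Prop :=
  forall g s, act g s = s -> g = monoid.one.

Definition chains (S : choiceType) (k : nat) := {freeg ((k.+1).-tuple S) / int}.

Definition face (S : Type) (k : nat) (j : 'I_k.+2) (x : (k.+2).-tuple S)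
  : (k.+1).-tuple S := [tuple tnth x (fintype.lift j i) | i < k.+1].

Definition bd (S : choiceType) (k : nat) (c : chains S k.+1) : chains S k :=
  fglift (fun x : (k.+2).-tuple S =>
            \sum_(j < k.+2) ((-1) ^+ j : int) *: (<< face j x >> : chains S k)) c.

Definition aug (S : choiceType) (c : chains S 0) : int := deg c.

Definition act_chain (G : groupType) (S : choiceType) (act : G -> S -> S)
  (k : nat) (g : G) (c : chains S k) : chains S k :=
  fglift (fun x : (k.+1).-tuple S =>
            (<< [tuple act g (tnth x i) | i < k.+1] >> : chains S k)) c.

Definition l1norm (S : choiceType) (k : nat) (c : chains S k) : int :=
  \sum_(x <- dom c) `|coeff x c|.

Definition essential (S : eqType) (k : nat) (x : (k.+1).-tuple S) : bool :=
  uniq (val x).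

Definition essnorm (S : choiceType) (k : nat) (c : chains S k) : int :=
  \sum_(x <- dom c | essential x) `|coeff x c|.

(* eta is a cone construction: eta_0 = id and, on a generator x
   of degree k+1, eta(x) = v(x) * eta(d x) if the entries of x are pairwise
   distinct and 0 otherwise, where v * (s_0,...,s_k) = (v,s_0,...,s_k).  The cone
   point v(x) is chosen once on each G-orbit of finite subsets of S and moved
   along the action.  This is well defined and equivariant because a nonempty
   finite set has trivial setwise stabiliser: if g permutes it, some power g^n
   fixes a point, so g^n = 1 by freeness and g = 1 by torsion-freeness.  As v(x)
   only depends on the set of entries of x, eta is alternating, hence eta d
   vanishes on tuples with a repeated entry; together with
   d(v * c) = c - v * d c this makes eta a chain map.  Coning does not increase
   the l1-norm and d x has k+2 faces, so |eta_k(x)|_1 <= (k+1)!. *)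

From HB Require Import structures.
From mathcomp Require Import all_boot all_order all_algebra perm.
From mathcomp Require monoid.
From mathcomp Require Import freeg zify.
From Stdlib Require Import ClassicalEpsilon FunctionalExtensionality PropExtensionality.

Set Implicit Arguments.
Unset Strict Implicit.
Unset Printing Implicit Defensive.

Import Order.TTheory GRing.Theory Num.Theory.
Local Open Scope ring_scope.

Section FreegLift.
Variables (R : nzRingType) (K : choiceType) (M : lmodType R) (f : K -> M).

HB.instance Definition _ := GRing.isZmodMorphism.Build {freeg K / R} M (fglift f)
  (lift_is_additive f).

Lemma fgliftU x : fglift f << x >> = f x.
Proof. by rewrite liftU scale1r. Qed.

Lemma fglift_is_scalable : scalable (fglift f).
Proof.
move=> c D; rewrite -[D in RHS]freeg_sumE !raddf_sum.
by apply: eq_bigr => x _ /=; rewrite !liftU scalerA.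
Qed.

HB.instance Definition _ := GRing.isScalable.Build R {freeg K / R} M *:%R (fglift f)
  fglift_is_scalable.
End FreegLift.

Section FreegInt.
Variable K : choiceType.
Implicit Types D : {freeg K / int}.

Lemma freeg_additive_ext (W : zmodType) (F1 F2 : {freeg K / int} -> W) :
  GRing.zmod_morphism F1 -> GRing.zmod_morphism F2 ->
  (forall x, F1 << x >> = F2 << x >>) -> F1 =1 F2.
Proof.
move=> F1B F2B eqF D.
pose f1 : {additive _ -> W} := HB.pack F1 (GRing.isZmodMorphism.Build _ _ F1 F1B).
pose f2 : {additive _ -> W} := HB.pack F2 (GRing.isZmodMorphism.Build _ _ F2 F2B).
rewrite -[F1]/(f1 : _ -> _) -[F2]/(f2 : _ -> _) -(freeg_sumE D) !raddf_sum.
by apply: eq_bigr => x _; rewrite -[coeff x D]intz -freegU_mulz !raddfMz /= eqF.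
Qed.

Lemma freeg_eqN_eq0 D : D = - D -> D = 0.
Proof.
move=> DN; apply/eqP/freeg_eqP => x; rewrite coeff0.
have /eqP : coeff x D = - coeff x D by rewrite -coeffN -DN.
by rewrite -subr_eq0 opprK -mulr2n mulrn_eq0 => /eqP.
Qed.

Definition fgl1norm D : int := \sum_(x <- dom D) `|coeff x D|.

Lemma fgl1norm_seq D s : uniq s -> {subset dom D <= s} ->
  fgl1norm D = \sum_(x <- s) `|coeff x D|.
Proof.
move=> s_uniq domDs; rewrite [RHS](bigID (mem (dom D))) /=.
rewrite [X in _ + X]big1 ?addr0 => [|x /negbTE xD]; last by rewrite coeff_outdom ?xD.
rewrite -big_filter; apply/perm_big/uniq_perm; rewrite ?filter_uniq ?uniq_dom //.
by move=> x; rewrite mem_filter andb_idr //; apply: domDs.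
Qed.

Lemma fgl1norm0 : fgl1norm 0 = 0.
Proof. by rewrite /fgl1norm dom0 big_nil. Qed.

Lemma fgl1normU x : fgl1norm << x >> = 1.
Proof. by rewrite /fgl1norm domU1 big_seq1 coeffU eqxx mulr1. Qed.

Lemma fgl1normZ c D : fgl1norm (c *: D) = `|c| * fgl1norm D.
Proof.
rewrite (fgl1norm_seq (uniq_dom D) (@domZ_subset _ _ c D)) mulr_sumr.
by apply: eq_bigr => x _; rewrite coeffZ normrM.
Qed.

Lemma ler_fgl1normD D1 D2 : fgl1norm (D1 + D2) <= fgl1norm D1 + fgl1norm D2.
Proof.
pose s := undup (dom D1 ++ dom D2).
have sub1 : {subset dom D1 <= s} by move=> x xD; rewrite mem_undup mem_cat xD.
have sub2 : {subset dom D2 <= s} by move=> x xD; rewrite mem_undup mem_cat xD orbT.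
have sub12 : {subset dom (D1 + D2) <= s} by move=> x /domD_subset; rewrite mem_undup.
rewrite !(@fgl1norm_seq _ s) ?undup_uniq // -big_split /=.
by apply: ler_sum => x _; rewrite coeffD ler_normD.
Qed.

Lemma ler_fgl1norm_sum (I : Type) (r : seq I) (P : pred I) (E : I -> {freeg K / int}) :
  fgl1norm (\sum_(i <- r | P i) E i) <= \sum_(i <- r | P i) fgl1norm (E i).
Proof.
elim/big_rec2: _ => [|i D n _ IH]; first by rewrite fgl1norm0.
by rewrite (le_trans (ler_fgl1normD _ _)) ?lerD2l.
Qed.
End FreegInt.

Lemma ler_fgl1norm_additive (K K' : choiceType)
  (F : {additive {freeg K / int} -> {freeg K' / int}}) (B : K -> int) (D : {freeg K / int}) :
  (forall x, fgl1norm (F << x >>) <= B x) ->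
  fgl1norm (F D) <= \sum_(x <- dom D) `|coeff x D| * B x.
Proof.
move=> FB; rewrite -{1}(freeg_sumE D) raddf_sum (le_trans (ler_fgl1norm_sum _ _ _)) //.
apply: ler_sum => x _; rewrite -[coeff x D]intz -freegU_mulz raddfMz -scaler_int.
by rewrite fgl1normZ intz ler_wpM2l.
Qed.

Section Faces.
Variable T : Type.

Lemma face0_cons k v (y : (k.+1).-tuple T) : face ord0 (cons_tuple v y) = y.
Proof. by apply: eq_from_tnth => m; rewrite tnth_mktuple tnthS. Qed.

Lemma face_lift_cons k v (j : 'I_k.+2) (y : (k.+2).-tuple T) :
  face (fintype.lift ord0 j) (cons_tuple v y) = cons_tuple v (face j y).
Proof.
apply: eq_from_tnth => m; rewrite tnth_mktuple.
have [m' ->|->] := unliftP ord0 m.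
  have -> : fintype.lift (fintype.lift ord0 j) (fintype.lift ord0 m') =
            fintype.lift ord0 (fintype.lift j m') by apply: ord_inj; rewrite /= /bump; lia.
  by rewrite !tnthS tnth_mktuple.
have -> : fintype.lift (fintype.lift ord0 j) ord0 = ord0 by apply: ord_inj.
by rewrite !tnth0.
Qed.

Definition adj_tperm n (i : 'I_n) : 'S_n.+1 :=
  tperm (widen_ord (leqnSn n) i) (fintype.lift ord0 i).

Lemma adj_tpermE n (i : 'I_n) m :
  nat_of_ord (adj_tperm i m) =
  if m == i :> nat then i.+1 else if m == i.+1 :> nat then nat_of_ord i else nat_of_ord m.
Proof.
rewrite /adj_tperm; case: tpermP => [->|->|/eqP + /eqP]; rewrite -?val_eqE /= /bump add1n.
all: by move=> *; repeat case: ifP; lia.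
Qed.

Definition tswap n (i : 'I_n) (x : n.+1.-tuple T) : n.+1.-tuple T :=
  [tuple tnth x (adj_tperm i m) | m < n.+1].

Lemma nth_tswap n (i : 'I_n) (x : n.+1.-tuple T) x0 m : (m < n.+1)%N ->
  nth x0 (tswap i x) m =
  nth x0 x (if m == i then i.+1 else if m == i.+1 then nat_of_ord i else m).
Proof.
by move=> lt_m; rewrite -[m]/(nat_of_ord (Ordinal lt_m)) -tnth_nth tnth_mktuple
  (tnth_nth x0) adj_tpermE.
Qed.

Lemma tswap_id n (i : 'I_n) (x : n.+1.-tuple T) x0 :
  nth x0 x i = nth x0 x i.+1 -> tswap i x = x.
Proof.
move=> eq_x; apply: val_inj; apply: (@eq_from_nth _ x0) => [|m]; rewrite !size_tuple //.
move=> lt_m; rewrite nth_tswap //.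
by case: eqP => [->|_]; [|case: eqP => [->|]].
Qed.

Lemma face_tswap_widen k (i : 'I_k.+1) (x : (k.+2).-tuple T) :
  face (widen_ord (leqnSn _) i) (tswap i x) = face (fintype.lift ord0 i) x.
Proof.
apply: eq_from_tnth => m; rewrite !tnth_mktuple; congr tnth; apply: ord_inj.
rewrite adj_tpermE /= /bump; repeat case: ifP; lia.
Qed.

Lemma face_tswap_lift k (i : 'I_k.+1) (x : (k.+2).-tuple T) :
  face (fintype.lift ord0 i) (tswap i x) = face (widen_ord (leqnSn _) i) x.
Proof.
apply: eq_from_tnth => m; rewrite !tnth_mktuple; congr tnth; apply: ord_inj.
rewrite adj_tpermE /= /bump; repeat case: ifP; lia.
Qed.

Lemma face_tswap k (i : 'I_k.+1) (j : 'I_k.+2) (x : (k.+2).-tuple T) :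
  j != widen_ord (leqnSn _) i -> j != fintype.lift ord0 i ->
  exists i', face j (tswap i x) = tswap i' (face j x).
Proof.
rewrite -!val_eqE /= /bump add1n => ne1 ne2.
have lt_i' : ((if j < i then i.-1 else i) < k)%N.
  by move: (ltn_ord i) (ltn_ord j); case: ifP; lia.
exists (Ordinal lt_i'); apply: eq_from_tnth => m; rewrite !tnth_mktuple; congr tnth.
apply: ord_inj; rewrite adj_tpermE /= adj_tpermE /= /bump; move: ne1 ne2; repeat case: ifP; lia.
Qed.
End Faces.

Lemma face_map_tuple (T T' : Type) k (f : T -> T') (j : 'I_k.+2) (x : (k.+2).-tuple T) :
  face j (map_tuple f x) = map_tuple f (face j x).
Proof. by apply: eq_from_tnth => m; rewrite !(tnth_map, tnth_mktuple). Qed.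

Lemma perm_tswap (T : eqType) n (i : 'I_n) (x : n.+1.-tuple T) : perm_eq (tswap i x) x.
Proof. by apply/tuple_permP; exists (adj_tperm i). Qed.

Section Chains.
Variable S : choiceType.

HB.instance Definition _ k :=
  GRing.isZmodMorphism.Build _ _ (@bd S k) (lift_is_additive _).
HB.instance Definition _ k :=
  GRing.isScalable.Build int _ _ *:%R (@bd S k) (fglift_is_scalable _).
HB.instance Definition _ := GRing.Additive.copy (@aug S) (@deg _).

Lemma bdU k (x : (k.+2).-tuple S) :
  bd << x >> = \sum_(j < k.+2) ((-1) ^+ j : int) *: (<< face j x >> : chains S k).
Proof. exact: fgliftU. Qed.

Definition cone k (v : S) : chains S k -> chains S k.+1 :=
  fglift (fun y : (k.+1).-tuple S => << cons_tuple v y >>).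

HB.instance Definition _ k v := GRing.Linear.copy (@cone k v) (fglift _).

Lemma coneU k v (y : (k.+1).-tuple S) : cone v << y >> = << cons_tuple v y >>.
Proof. exact: fgliftU. Qed.

Lemma bd_cone k v (d : chains S k.+1) : bd (cone v d) = d - cone v (bd d).
Proof.
move: d; apply: freeg_additive_ext.
- by move=> a b /=; rewrite !raddfB.
- by move=> a b /=; rewrite !raddfB /= addrACA.
move=> y /=; rewrite coneU bdU big_ord_recl face0_cons expr0 scale1r; congr (_ + _).
rewrite bdU !raddf_sum; apply: eq_bigr => j _ /=.
by rewrite face_lift_cons linearZ /= coneU exprS mulN1r scaleNr.
Qed.

Lemma bd_cone0 v (d : chains S 0) : bd (cone v d) = d - aug d *: << [tuple v] >>.
Proof.
move: d; apply: freeg_additive_ext.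
- by move=> a b /=; rewrite !raddfB.
- by move=> a b /=; rewrite raddfB scalerBl /= !raddfB /= addrACA.
move=> y /=; rewrite coneU bdU !big_ord_recl big_ord0 addr0 face0_cons expr0 scale1r.
congr (_ + _); rewrite /aug degU expr1 scaleN1r scale1r; congr (- << _ >>).
by apply: eq_from_tnth => m; rewrite (ord1 m) !tnth_mktuple.
Qed.

Lemma aug_bd (c : chains S 1) : aug (bd c) = 0.
Proof.
move: c; apply: freeg_additive_ext.
- by move=> a b /=; rewrite !raddfB.
- by move=> a b; rewrite subrr.
move=> x /=; rewrite bdU !big_ord_recl big_ord0 addr0 expr0 scale1r expr1 scaleN1r.
by rewrite raddfB /= /aug !degU subrr.
Qed.

Lemma bd_bd k (c : chains S k.+2) : bd (bd c) = 0.
Proof.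
elim: k c => [|k IH] c; move: c;
  apply: freeg_additive_ext => //;
  do ?by move=> a b /=; rewrite ?subrr ?raddfB.
- case/tupleP=> v y /=; rewrite -coneU bd_cone raddfB /= bd_cone0.
  by rewrite aug_bd scale0r subr0 subrr.
- case/tupleP=> v y /=; rewrite -coneU bd_cone raddfB /= bd_cone IH.
  by rewrite raddf0 subr0 subrr.
Qed.

Lemma ler_fgl1norm_cone k v (d : chains S k) : fgl1norm (cone v d) <= fgl1norm d.
Proof.
apply: le_trans (ler_fgl1norm_additive (F := cone v) (B := fun=> 1) d _) _.
  by move=> y /=; rewrite coneU fgl1normU.
by rewrite (eq_bigr _ (fun x _ => mulr1 _)).
Qed.
End Chains.

Section ChainAction.
Variables (G : groupType) (S : choiceType) (act : G -> S -> S).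

HB.instance Definition _ k g :=
  GRing.isZmodMorphism.Build _ _ (@act_chain G S act k g) (lift_is_additive _).
HB.instance Definition _ k g :=
  GRing.isScalable.Build int _ _ *:%R (@act_chain G S act k g) (fglift_is_scalable _).

Lemma act_chainU k g (x : (k.+1).-tuple S) :
  act_chain act g << x >> = << map_tuple (act g) x >>.
Proof.
rewrite /act_chain fgliftU; congr << _ >>.
by apply: eq_from_tnth => i; rewrite !tnth_map tnth_ord_tuple.
Qed.

Lemma bd_act_chain k g (c : chains S k.+1) :
  bd (act_chain act g c) = act_chain act g (bd c).
Proof.
move: c; apply: freeg_additive_ext; do ?by move=> a b /=; rewrite !raddfB.
move=> x /=; rewrite act_chainU !bdU raddf_sum; apply: eq_bigr => j _ /=.
by rewrite linearZ /= act_chainU face_map_tuple.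
Qed.

Lemma cone_act_chain k g v (d : chains S k) :
  cone (act g v) (act_chain act g d) = act_chain act g (cone v d).
Proof.
move: d; apply: freeg_additive_ext; do ?by move=> a b /=; rewrite !raddfB.
move=> y /=; rewrite act_chainU !coneU act_chainU; congr << _ >>.
by apply: val_inj.
Qed.
End ChainAction.

Section EquivariantVertex.
Variables (G : groupType) (S : eqType) (act : G -> S -> S) (s0 : S).
Hypotheses (G_torsion_free : torsion_free G) (act_action : is_action act)
  (act_free : free_action act).
Implicit Types (g h : G) (x y : seq S).

Lemma act1 s : act monoid.one s = s. Proof. exact: act_action.1. Qed.

Lemma actM g h s : act (monoid.mul g h) s = act g (act h s).
Proof. exact: act_action.2. Qed.

Lemma actK g : cancel (act g) (act (monoid.inv g)).
Proof. by move=> s; rewrite -actM monoid.mulVg act1. Qed.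

Lemma map_act1 x : map (act monoid.one) x = x.
Proof. by rewrite (eq_map act1) map_id. Qed.

Lemma map_actM g h x : map (act (monoid.mul g h)) x = map (act g) (map (act h) x).
Proof. by rewrite -map_comp; apply: eq_map => s; rewrite /= actM. Qed.

Lemma setwise_stabilizer_trivial h x : x != [::] -> map (act h) x =i x -> h = monoid.one.
Proof.
case: x => // r x' _; set x := r :: x' => x_fixed.
have orbit_in_x n : act (monoid.natexp h n) r \in x.
  elim: n => [|n IH]; first by rewrite monoid.expg0 act1 mem_head.
  by rewrite monoid.expgS actM -x_fixed map_f.
pose orbit := [seq act (monoid.natexp h n) r | n <- iota 0 (size x).+1].
have orbit_sub : {subset orbit <= x} by move=> _ /mapP[n _ ->].
have /(uniqPn r) [i [j [lt_ij lt_j]]] : ~~ uniq orbit.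
  by apply/negP => /uniq_leq_size/(_ orbit_sub); rewrite size_map size_iota ltnn.
rewrite size_map size_iota in lt_j.
rewrite !(nth_map 0%N) ?size_iota ?(ltn_trans lt_ij) // !nth_iota ?(ltn_trans lt_ij) //.
rewrite !add0n -(subnK (ltnW lt_ij)) monoid.expgnDr actM => /esym/act_free.
by apply: G_torsion_free; rewrite subn_gt0.
Qed.

Lemma translation_unique g h x : x != [::] -> map (act g) x =i map (act h) x -> g = h.
Proof.
move=> x_nil eq_gh.
suff : monoid.mul (monoid.inv h) g = monoid.one.
  by move=> hVg1; rewrite -(monoid.mulVKg h g) hVg1 monoid.mulg1.
apply: (setwise_stabilizer_trivial x_nil) => s.
by rewrite map_actM -[in RHS](mapK (actK h) x); apply: eq_mem_map.
Qed.

Definition translate_of x y := exists g, map (act g) x =i y.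

(* Finite subsets of S are represented by seqs up to =i: orbit_rep x represents
   the G-orbit of the set of entries of x, and transporter x is the (unique)
   element of G moving that set onto it. *)
Definition orbit_rep x : seq S := epsilon (inhabits [::]) (translate_of x).
Definition transporter x : G :=
  epsilon (inhabits monoid.one) (fun g => map (act g) x =i orbit_rep x).
Definition vertex x : S := act (monoid.inv (transporter x)) (head s0 (orbit_rep x)).

Lemma transporterP x : map (act (transporter x)) x =i orbit_rep x.
Proof.
have rep_translate : translate_of x (orbit_rep x).
  by apply: epsilon_spec; exists x, monoid.one; rewrite map_act1.
exact: (epsilon_spec (inhabits monoid.one) _ rep_translate).
Qed.

Lemma orbit_rep_translate h x y : y =i map (act h) x -> orbit_rep y = orbit_rep x.
Proof.
move=> eq_y; rewrite /orbit_rep; congr epsilon.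
apply: functional_extensionality => z; apply: propositional_extensionality.
split=> -[g eq_z].
- exists (monoid.mul g h) => s; rewrite map_actM -eq_z; apply: eq_mem_map => t.
  by rewrite eq_y.
- exists (monoid.mul g (monoid.inv h)) => s; rewrite -eq_z (eq_mem_map _ eq_y).
  by rewrite -map_actM monoid.mulgVK.
Qed.

Lemma vertex_eq_mem x y : x =i y -> vertex x = vertex y.
Proof.
have [->|x_nil] := eqVneq x [::].
  by move=> eq_y; case: y eq_y => // s y /(_ s); rewrite mem_head.
move=> eq_xy.
have rep_y : orbit_rep y = orbit_rep x.
  by apply: (orbit_rep_translate (h := monoid.one)) => s; rewrite map_act1 eq_xy.
rewrite /vertex rep_y; congr (act (monoid.inv _) _).
apply: (translation_unique x_nil) => s.
by rewrite transporterP (eq_mem_map _ eq_xy) transporterP rep_y.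
Qed.

Lemma vertex_act h x : x != [::] -> vertex (map (act h) x) = act h (vertex x).
Proof.
move=> x_nil.
have rep_hx : orbit_rep (map (act h) x) = orbit_rep x by apply: orbit_rep_translate.
have transporter_hx : monoid.mul (transporter (map (act h) x)) h = transporter x.
  apply: (translation_unique x_nil) => s.
  by rewrite map_actM !transporterP rep_hx.
by rewrite /vertex rep_hx -actM -transporter_hx monoid.invgM monoid.mulVKg.
Qed.
End EquivariantVertex.

Section Alternating.
Variable S : choiceType.

Definition alternating k (W : zmodType) (F : chains S k -> W) :=
  forall (y : (k.+1).-tuple S) (i : 'I_k), F << tswap i y >> = - F << y >>.

Lemma alternating_bd_tswap k (W : lmodType int) (F : {linear chains S k -> W})
  (x : (k.+2).-tuple S) (i : 'I_k.+1) :
  alternating F -> F (bd << tswap i x >>) = - F (bd << x >>).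
Proof.
move=> F_alt; rewrite !bdU !raddf_sum.
rewrite [RHS](reindex_inj (@perm_inj _ (adj_tperm i))); apply: eq_bigr => j _ /=.
rewrite !linearZ /= /adj_tperm; case: tpermP => [->|->|/eqP ne1 /eqP ne2].
- by rewrite face_tswap_widen /= /bump add1n exprS mulN1r scaleNr scalerN opprK.
- by rewrite face_tswap_lift /= /bump add1n exprS mulN1r scaleNr scalerN.
have [i' ->] := face_tswap x ne1 ne2.
by rewrite F_alt scalerN.
Qed.

(* Adjacent swaps bring two equal entries next to each other, changing only signs. *)
Lemma alternating_bd_degenerate k (K : choiceType)
  (F : {linear chains S k -> {freeg K / int}}) (x : (k.+2).-tuple S) :
  alternating F -> ~~ uniq x -> F (bd << x >>) = 0.
Proof.
move=> F_alt; have x0 : S := thead x.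
case/(uniqPn x0) => a [b [lt_ab]]; rewrite size_tuple.
elim: b x lt_ab => // b IH x; rewrite ltnS leq_eqVlt => /predU1P[-> | lt_ab] lt_b eq_ab.
  have lt_b' : (b < k.+1)%N by [].
  apply: freeg_eqN_eq0.
  by rewrite -{1}(tswap_id (i := Ordinal lt_b') eq_ab) alternating_bd_tswap.
have lt_b' : (b < k.+1)%N by [].
have eq_y : nth x0 (tswap (Ordinal lt_b') x) a = nth x0 (tswap (Ordinal lt_b') x) b.
  rewrite !nth_tswap /= ?eqxx; [|lia|lia].
  by rewrite ifN ?ifN //; lia.
apply/eqP; rewrite -oppr_eq0 -(alternating_bd_tswap _ (Ordinal lt_b')) //.
by rewrite (IH _ lt_ab) //; lia.
Qed.
End Alternating.

Section Construction.
Variables (G : groupType) (S : choiceType) (act : G -> S -> S) (s0 : S).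
Hypotheses (G_torsion_free : torsion_free G) (act_action : is_action act)
  (act_free : free_action act).

Local Notation vertex := (vertex act s0).

Fixpoint eta_gen k : (k.+1).-tuple S -> chains S k :=
  match k with
  | 0 => fun x => << x >>
  | k'.+1 => fun x =>
      if uniq x then cone (vertex x) (fglift (@eta_gen k') (bd << x >>)) else 0
  end.

Definition eta k : chains S k -> chains S k := fglift (@eta_gen k).
Arguments eta k : clear implicits.

HB.instance Definition _ k := GRing.Linear.copy (eta k) (fglift _).

Lemma eta0 (c : chains S 0) : eta 0 c = c.
Proof.
move: c; apply: freeg_additive_ext.
- by move=> a b; rewrite raddfB.
- by [].
exact: fgliftU.
Qed.

Lemma etaU k (x : (k.+2).-tuple S) :
  eta k.+1 << x >> = if uniq x then cone (vertex x) (eta k (bd << x >>)) else 0.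
Proof. exact: fgliftU. Qed.

Lemma eta_alternating k : alternating (eta k).
Proof.
elim: k => [|k IH] x i; first by case: i.
rewrite !etaU (perm_uniq (perm_tswap i x)) (alternating_bd_tswap _ _ IH).
rewrite (vertex_eq_mem s0 G_torsion_free act_action act_free (perm_mem (perm_tswap i x))).
by case: (uniq x); rewrite ?oppr0 ?raddfN.
Qed.

Lemma bd_eta k : forall c : chains S k.+1, bd (eta k.+1 c) = eta k (bd c).
Proof.
elim: k => [|k IH]; apply: freeg_additive_ext; do ?by move=> a b; rewrite !raddfB.
all: move=> x /=; rewrite etaU; case: ifP => [_ | /negbT x_degenerate];
  try by rewrite raddf0 alternating_bd_degenerate //; apply: eta_alternating.
- by rewrite bd_cone0 !eta0 aug_bd scale0r oppr0 addr0.
by rewrite (bd_cone (vertex x)) IH bd_bd !raddf0 addr0.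
Qed.

Lemma eta_act k g (c : chains S k) :
  eta k (act_chain act g c) = act_chain act g (eta k c).
Proof.
elim: k c => [|k IH] c; first by rewrite !eta0.
move: c; apply: freeg_additive_ext; do ?by move=> a b; rewrite !raddfB.
move=> x /=; rewrite act_chainU !etaU map_inj_uniq; last exact: can_inj (actK act_action g).
case: ifP => _; last by rewrite raddf0.
rewrite (vertex_act s0 G_torsion_free act_action act_free); last first.
  by rewrite -size_eq0 size_tuple.
by rewrite -cone_act_chain -IH -bd_act_chain act_chainU.
Qed.

Lemma l1norm_etaU k (x : (k.+1).-tuple S) :
  fgl1norm (eta k << x >>) <= if uniq x then (k.+1)`!%:R else 0.
Proof.
elim: k x => [|k IH] x.
  by rewrite eta0 fgl1normU; case: x => -[|a []].
rewrite etaU; case: ifP => _; last by rewrite fgl1norm0.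
rewrite (le_trans (ler_fgl1norm_cone _ _)) // bdU raddf_sum.
rewrite (le_trans (ler_fgl1norm_sum _ _ _)) // factS natrM mulr_natl.
rewrite -[X in _ *+ X](card_ord k.+2) -sumr_const; apply: ler_sum => j _ /=.
rewrite linearZ fgl1normZ normrX normrN normr1 expr1n mul1r.
by rewrite (le_trans (IH _)) //; case: ifP.
Qed.

Lemma l1norm_eta k (c : chains S k) : l1norm (eta k c) <= (k.+1)`!%:R * essnorm c.
Proof.
rewrite (le_trans (ler_fgl1norm_additive c (@l1norm_etaU k))) //.
rewrite /essnorm mulr_sumr [X in _ <= X]big_mkcond /=; apply: ler_sum => x _.
by rewrite /essential; case: ifP; rewrite ?mulr0 // mulrC.
Qed.
End Construction.

Theorem proposition5p9 (G : groupType) (S : choiceType) (act : G -> S -> S)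
  (hG : torsion_free G) (hact : is_action act) (hfree : free_action act)
  (s0 : S) :
  exists eta : forall k : nat, chains S k -> chains S k,
    [/\ (forall k, GRing.zmod_morphism (eta k)),
        (forall k (g : G) (c : chains S k),
            eta k (act_chain act g c) = act_chain act g (eta k c)),
        (forall k (c : chains S k.+1), bd (eta k.+1 c) = eta k (bd c)),
        (forall c : chains S 0%N, aug (eta 0%N c) = aug c) &
        (forall k (c : chains S k),
            l1norm (eta k c) <= ((k.+1)`!)%:R * essnorm c)].
Proof.
exists (eta act s0); split.
- by move=> k; exact: raddfB.
- exact: eta_act.
- exact: bd_eta.
- by move=> c; rewrite eta0.
- exact: l1norm_eta.
Qed.
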